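(* Let $R,S$ be rings and $M$ an $(S,R)$-bimodule. If $M$ is a generator of ${}_S\mathcal{M}$ and the canonical map $\chi:R\to{}_S\mathrm{End}(M)$ is an epimorphism in the category of rings, then the coinduction functor $G={}_S\mathrm{Hom}(M,\bullet):{}_S\mathcal{M}\to{}_R\mathcal{M}$ is fully faithful, that is, all counit maps $\varepsilon_Q:M\otimes_R{}_S\mathrm{Hom}(M,Q)\to Q$, $\varepsilon_Q(m\otimes_R f)=(m)f$, are isomorphisms.
   Context: Left $S$-linear maps are written on the right: $(m)f$; ${}_S\mathrm{End}(M)$ is a ring with $(m)(fg)=((m)f)g$, and $\chi(r)$ is the endomorphism $m\mapsto mr$. For $Q\in{}_S\mathcal{M}$, ${}_S\mathrm{Hom}(M,Q)$ is a left $R$-module via $(m)(r\cdot f)=(mr)f$. $G$ is right adjoint to $M\otimes_R\bullet:{}_R\mathcal{M}\to{}_S\mathcal{M}$ with counit $\varepsilon$ as given. *)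

From HB Require Import structures.
From mathcomp Require Import all_boot all_order all_algebra.
Set Implicit Arguments. Unset Strict Implicit. Unset Printing Implicit Defensive.
Import GRing.Theory.
Local Open Scope ring_scope.

(* Left S-modules are [lmodType S].  Maps are applied as ordinary functions;
   the paper's right-written (m)f is here [f m]. *)

Definition is_Slin (S : pzRingType) (M Q : lmodType S) (f : M -> Q) : Prop :=
  forall (s : S) (x y : M), f (s *: x + y) = s *: f x + f y.

Definition is_additive (A B : zmodType) (phi : A -> B) : Prop :=
  forall x y, phi (x + y) = phi x + phi y.

Definition is_bimodule (S R : pzRingType) (M : lmodType S) (ract : M -> R -> M) : Prop :=
  [/\ (forall m r1 r2, ract m (r1 + r2) = ract m r1 + ract m r2),
      (forall m1 m2 r, ract (m1 + m2) r = ract m1 r + ract m2 r),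
      (forall m r1 r2, ract m (r1 * r2) = ract (ract m r1) r2),
      (forall m, ract m 1 = m) &
      (forall (s : S) m r, ract (s *: m) r = s *: ract m r)].

(* M is a generator of S-Mod: every left S-module N is the sum of the images
   of the S-linear maps M -> N (equivalently, N is an epimorphic image of a
   direct sum of copies of M). *)
Definition is_generator (S : pzRingType) (M : lmodType S) : Prop :=
  forall (N : lmodType S) (n : N),
    exists (k : nat) (fs : 'I_k -> M -> N) (ms : 'I_k -> M),
      (forall i, is_Slin (fs i)) /\ n = \sum_(i < k) fs i (ms i).

Section Coinduction.
Variables (S R : pzRingType) (M : lmodType S) (ract : M -> R -> M).

Definition chi (r : R) : M -> M := fun m => ract m r.

(* g : End_S(M) -> T is a (unital) ring morphism, where End_S(M) is the ring of
   S-linear maps M -> M with pointwise sum and product (fg)(m) = g (f m)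
   (maps written on the right).  Only the values of g on S-linear maps matter. *)
Definition is_End_rmorph (T : pzRingType) (g : (M -> M) -> T) : Prop :=
  [/\ (forall f1 f2, is_Slin f1 -> is_Slin f2 ->
         g (fun m => f1 m + f2 m) = g f1 + g f2),
      (forall f1 f2, is_Slin f1 -> is_Slin f2 ->
         g (fun m => f2 (f1 m)) = g f1 * g f2) &
      g (fun m => m) = 1].

Definition chi_ring_epi : Prop :=
  forall (T : pzRingType) (g h : (M -> M) -> T),
    is_End_rmorph g -> is_End_rmorph h ->
    (forall r, g (chi r) = h (chi r)) ->
    forall f, is_Slin f -> g f = h f.

(* Maps M x Hom_S(M,Q) -> A that are biadditive and R-balanced, where the left
   R-action on Hom_S(M,Q) is (r.f)(m) = f (m r). *)
Definition is_Rbalanced (Q : lmodType S) (A : zmodType)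
    (beta : M -> (M -> Q) -> A) : Prop :=
  [/\ (forall m1 m2 f, is_Slin f -> beta (m1 + m2) f = beta m1 f + beta m2 f),
      (forall m f1 f2, is_Slin f1 -> is_Slin f2 ->
         beta m (fun x => f1 x + f2 x) = beta m f1 + beta m f2) &
      (forall m r f, is_Slin f -> beta (ract m r) f = beta m (fun x => f (ract x r)))].

Definition is_tensor_product (Q : lmodType S) (P : zmodType)
    (t : M -> (M -> Q) -> P) : Prop :=
  is_Rbalanced t /\
  forall (A : zmodType) (beta : M -> (M -> Q) -> A), is_Rbalanced beta ->
    (exists phi : P -> A, is_additive phi /\
        forall m f, is_Slin f -> phi (t m f) = beta m f) /\
    (forall phi1 phi2 : P -> A, is_additive phi1 -> is_additive phi2 ->
        (forall m f, is_Slin f -> phi1 (t m f) = beta m f) ->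
        (forall m f, is_Slin f -> phi2 (t m f) = beta m f) ->
        forall x, phi1 x = phi2 x).

(* The counit eps_Q : M (x)_R Hom_S(M,Q) -> Q, m (x) f |-> (m)f, is an
   isomorphism iff (Q, (m,f) |-> f m) is itself a tensor product
   M (x)_R Hom_S(M,Q). *)
Definition counit_iso (Q : lmodType S) : Prop :=
  is_tensor_product (fun (m : M) (f : M -> Q) => f m).

End Coinduction.

(* An R-balanced map beta : M x Hom_S(M,Q) -> A is automatically End_S(M)-balanced,
   beta (e m) f = beta m (f o e).  Let T be the ring of additive endomorphisms of
   X = Hom_Z(M,A) x Hom_S(M,Q).  Precomposition is a ring map g : End_S(M) -> T,
   and n (x, f) = (beta(-, f), 0) satisfies n^2 = 0, so h = (1+n) g (1-n) is a
   second ring map.  R-balancedness says that n commutes with every g (chi r),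
   i.e. g o chi = h o chi; as chi is a ring epimorphism, g = h, so n commutes
   with every g e, which is End_S(M)-balancedness.
   Since M is a generator, 1 = sum_j p_j (y_j) with p_j : M -> S S-linear, and
   then q |-> sum_j beta (y_j, p_j(-) q) is the unique additive map through which
   an End_S(M)-balanced beta factors along evaluation (m, f) |-> f m. *)

From HB Require Import structures.
From mathcomp Require Import all_boot all_order all_algebra.
From mathcomp Require Import boolp functions.
Set Implicit Arguments. Unset Strict Implicit. Unset Printing Implicit Defensive.
Import GRing.Theory.
Local Open Scope ring_scope.

Section AdditiveMaps.
Variables U V : zmodType.

Definition additive_fun : {pred U -> V} := fun f => `[< is_additive f >].

Lemma additive_fun_zmod_closed : zmod_closed additive_fun.
Proof.
split; first by apply/asboolP => x y; rewrite addr0.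
move=> f g /asboolP fD /asboolP gD; apply/asboolP => x y.
by rewrite !fctE fD gD opprD addrACA.
Qed.

HB.instance Definition _ := GRing.isZmodClosed.Build (U -> V) additive_fun
  additive_fun_zmod_closed.

Record addHom := AddHom { addHom_fun :> U -> V; _ : addHom_fun \in additive_fun }.
HB.instance Definition _ := [isSub for addHom_fun].
HB.instance Definition _ := [Choice of addHom by <:].
HB.instance Definition _ := [SubChoice_isSubZmodule of addHom by <:].

Lemma addHomD (a : addHom) : is_additive a.
Proof. by case: a => f /= /asboolW. Qed.

Lemma addHom_eq (a b : addHom) : a =1 b -> a = b.
Proof. by move=> ab; apply/val_inj/funext. Qed.
End AdditiveMaps.
Arguments additive_fun {U V}.

Lemma additive0 (U V : zmodType) (phi : U -> V) : is_additive phi -> phi 0 = 0.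
Proof. by move=> phiD; apply: (addrI (phi 0)); rewrite -phiD !addr0. Qed.

Lemma additive_sum (U V : zmodType) (phi : U -> V) : is_additive phi ->
  forall (I : Type) (r : seq I) (P : pred I) (F : I -> U),
    phi (\sum_(i <- r | P i) F i) = \sum_(i <- r | P i) phi (F i).
Proof. by move=> phiD; apply: big_morph phiD (additive0 phiD). Qed.

Lemma additive_fun_comp (U V W : zmodType) (a : addHom V W) (b : U -> V) :
  is_additive b -> (fun x => a (b x)) \in additive_fun.
Proof. by move=> bD; apply/asboolP => x y; rewrite bD addHomD. Qed.

Section AdditiveEndomorphisms.
Variable V : zmodType.

Definition addEnd := addHom V V.
HB.instance Definition _ := GRing.Zmodule.on addEnd.

Lemma additive_fun_id : (fun x : V => x) \in additive_fun.
Proof. exact/asboolP. Qed.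

Definition addEnd_one : addEnd := AddHom additive_fun_id.
Definition addEnd_mul (a b : addEnd) : addEnd := AddHom (additive_fun_comp a (addHomD b)).

Lemma addEnd_mulA : associative addEnd_mul.
Proof. by move=> a b c; exact: addHom_eq. Qed.
Lemma addEnd_mul1r : left_id addEnd_one addEnd_mul.
Proof. by move=> a; exact: addHom_eq. Qed.
Lemma addEnd_mulr1 : right_id addEnd_one addEnd_mul.
Proof. by move=> a; exact: addHom_eq. Qed.
Lemma addEnd_mulDl : left_distributive addEnd_mul +%R.
Proof. by move=> a b c; exact: addHom_eq. Qed.
Lemma addEnd_mulDr : right_distributive addEnd_mul +%R.
Proof. by move=> a b c; apply: addHom_eq => x /=; rewrite addHomD. Qed.

HB.instance Definition _ := GRing.Zmodule_isPzRing.Build addEnd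
  addEnd_mulA addEnd_mul1r addEnd_mulr1 addEnd_mulDl addEnd_mulDr.
End AdditiveEndomorphisms.

Section SLinearMaps.
Variables (S : pzRingType) (M Q : lmodType S).

Lemma SlinD (f : M -> Q) : is_Slin f -> is_additive f.
Proof. by move=> fS x y; rewrite -[x in f (x + _)]scale1r fS scale1r. Qed.

Lemma Slin_id : is_Slin (fun x : M => x).
Proof. by []. Qed.

Lemma SlinZ (f : M -> Q) : is_Slin f -> forall s x, f (s *: x) = s *: f x.
Proof. by move=> fS s x; rewrite -[s *: x]addr0 fS (additive0 (SlinD fS)) addr0. Qed.

Lemma Slin_add (f g : M -> Q) : is_Slin f -> is_Slin g -> is_Slin (fun x => f x + g x).
Proof. by move=> fS gS s x y; rewrite fS gS scalerDr addrACA. Qed.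

Definition Slinear : {pred M -> Q} := fun f => `[< is_Slin f >].

Lemma Slinear_zmod_closed : zmod_closed Slinear.
Proof.
split; first by apply/asboolP => s x y; rewrite scaler0 addr0.
move=> f g /asboolP fS /asboolP gS; apply/asboolP => s x y.
by rewrite !fctE fS gS scalerBr opprD addrACA.
Qed.

HB.instance Definition _ := GRing.isZmodClosed.Build (M -> Q) Slinear
  Slinear_zmod_closed.

Record Shom := SHom { Shom_fun :> M -> Q; _ : Shom_fun \in Slinear }.
HB.instance Definition _ := [isSub for Shom_fun].
HB.instance Definition _ := [Choice of Shom by <:].
HB.instance Definition _ := [SubChoice_isSubZmodule of Shom by <:].

Lemma ShomP (f : Shom) : is_Slin f.
Proof. by case: f => f /= /asboolW. Qed.
End SLinearMaps.

Lemma Slin_comp (S : pzRingType) (M N Q : lmodType S) (f : N -> Q) (e : M -> N) :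
  is_Slin f -> is_Slin e -> is_Slin (fun x => f (e x)).
Proof. by move=> fS eS s x y; rewrite eS fS. Qed.

Lemma chi_Slin (S R : pzRingType) (M : lmodType S) (ract : M -> R -> M) :
  is_bimodule ract -> forall r, is_Slin (chi ract r).
Proof. by case=> _ ractD _ _ ractZ r s x y; rewrite /chi ractD ractZ. Qed.

Lemma generator_trace1 (S : pzRingType) (M : lmodType S) : is_generator M ->
  exists k (ps : 'I_k -> M -> S) (ys : 'I_k -> M),
    (forall j, is_Slin (ps j : M -> S^o)) /\ \sum_(j < k) ps j (ys j) = 1.
Proof. by move=> /(_ S^o 1) [k [ps [ys [psS /esym ps_sum]]]]; exists k, ps, ys. Qed.

Section SquareZeroConjugation.
Variables (T : pzRingType) (n : T).
Hypothesis n2 : n * n = 0.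

Lemma sqr0_addK : (1 + n) * (1 - n) = 1.
Proof. by rewrite mulrDl mul1r mulrBr mulr1 n2 subr0 subrK. Qed.

Lemma sqr0_subK : (1 - n) * (1 + n) = 1.
Proof. by rewrite mulrBl mul1r mulrDr mulr1 n2 addr0 addrK. Qed.

Lemma sqr0_conj_fixed x : (1 + n) * x * (1 - n) = x <-> n * x = x * n.
Proof.
have comm_1n : (1 + n) * x = x * (1 + n) <-> n * x = x * n.
  by rewrite mulrDl mulrDr mul1r mulr1; split=> [/addrI|->].
split=> [fixed|/comm_1n ->]; last by rewrite -mulrA sqr0_addK mulr1.
by apply/comm_1n; rewrite -{2}fixed -mulrA sqr0_subK mulr1.
Qed.
End SquareZeroConjugation.

Lemma End_rmorph_conj (S : pzRingType) (M : lmodType S) (T : pzRingType)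
    (g : (M -> M) -> T) (u v : T) :
  u * v = 1 -> v * u = 1 -> is_End_rmorph g -> is_End_rmorph (fun e => u * g e * v).
Proof.
move=> uv vu [gD gM g1]; split=> [f1 f2 f1S f2S|f1 f2 f1S f2S|].
- by rewrite gD // mulrDr mulrDl.
- by rewrite gM // -!mulrA; congr (u * _); rewrite [v * _]mulrA vu mul1r.
- by rewrite g1 mulr1.
Qed.

Definition End_balanced (S : pzRingType) (M Q : lmodType S) (A : zmodType)
    (beta : M -> (M -> Q) -> A) : Prop :=
  forall (e : M -> M) (f : M -> Q) (m : M), is_Slin e -> is_Slin f ->
    beta (e m) f = beta m (fun x => f (e x)).

Section RBalancedMaps.
Variables (S R : pzRingType) (M : lmodType S) (ract : M -> R -> M).
Variables (Q : lmodType S) (A : zmodType) (beta : M -> (M -> Q) -> A).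
Hypothesis beta_bal : is_Rbalanced ract beta.

Lemma Rbalanced_additivel (f : M -> Q) : is_Slin f -> is_additive (beta^~ f).
Proof. by case: beta_bal => betaD _ _ fS m1 m2; rewrite betaD. Qed.

Lemma Rbalanced_Shom_additive m : is_additive (fun f : Shom M Q => beta m f).
Proof. by case: beta_bal => _ betaD _ f1 f2; rewrite /= -betaD //; exact: ShomP. Qed.

Section EndAction.
Local Notation X := (addHom M A * Shom M Q)%type.

Section Precomposition.
Variables (e : M -> M) (eS : is_Slin e).

Definition precomp (x : X) : X :=
  (AddHom (additive_fun_comp x.1 (SlinD eS)),
   SHom (asboolT (Slin_comp (ShomP x.2) eS))).

Lemma precomp_additive : precomp \in additive_fun.
Proof. by apply/asboolP => x y; congr (_, _); exact: val_inj. Qed.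
End Precomposition.

(* Junk value 0 outside End_S(M), which [is_End_rmorph] never looks at. *)
Definition act_End (e : M -> M) : addEnd X :=
  if pselect (is_Slin e) is left eS then AddHom (precomp_additive eS) else 0.

Lemma act_EndE e (eS : is_Slin e) : act_End e = AddHom (precomp_additive eS).
Proof.
rewrite /act_End; case: pselect => [eS'|]; last by [].
by congr (AddHom (precomp_additive _)); exact: Prop_irrelevance.
Qed.

Lemma act_End_rmorph : is_End_rmorph act_End.
Proof.
split=> [f1 f2 f1S f2S|f1 f2 f1S f2S|].
- rewrite (act_EndE (Slin_add f1S f2S)) (act_EndE f1S) (act_EndE f2S).
  apply: addHom_eq => x; congr (_, _); apply/val_inj/funext => m /=.
    by rewrite fctE addHomD.
  by rewrite fctE (SlinD (ShomP _)).
- rewrite (act_EndE (Slin_comp f2S f1S)) (act_EndE f1S) (act_EndE f2S).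
  by apply: addHom_eq => x; congr (_, _); exact: val_inj.
- rewrite (act_EndE (@Slin_id _ M)).
  by apply: addHom_eq => -[x1 x2]; congr (_, _); exact: val_inj.
Qed.

Definition nbeta_fun (x : X) : X :=
  (AddHom (asboolT (Rbalanced_additivel (ShomP x.2))), 0).

Lemma nbeta_fun_additive : nbeta_fun \in additive_fun.
Proof.
apply/asboolP => x y; congr (_, _); last by rewrite addr0.
by apply/val_inj/funext => m; exact: Rbalanced_Shom_additive.
Qed.

Definition nbeta : addEnd X := AddHom nbeta_fun_additive.

Lemma nbeta_sqr : nbeta * nbeta = 0.
Proof.
apply: addHom_eq => x; congr (_, _).
by apply/val_inj/funext => m; exact: additive0 (Rbalanced_Shom_additive m).
Qed.

Lemma nbeta_act_End_commute e (eS : is_Slin e) :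
  nbeta * act_End e = act_End e * nbeta <->
  forall (f : Shom M Q) m, beta (e m) f = beta m (fun x => f (e x)).
Proof.
rewrite act_EndE; split=> [comm f m|bal].
  by have /(congr1 (fun a : addEnd X => val (a (0, f)).1 m)) := comm.
apply: addHom_eq => x; congr (_, _); last exact: val_inj.
by apply/val_inj/funext => m /=; rewrite bal.
Qed.

Theorem Rbalanced_End_balanced :
  is_bimodule ract -> chi_ring_epi ract -> End_balanced beta.
Proof.
move=> bim epi e f m eS fS.
pose conj_act e := (1 + nbeta) * act_End e * (1 - nbeta).
have conj_rmorph : is_End_rmorph conj_act.
  exact: End_rmorph_conj (sqr0_addK nbeta_sqr) (sqr0_subK nbeta_sqr) act_End_rmorph.
have act_chi_fixed r : act_End (chi ract r) = conj_act (chi ract r).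
  apply/esym/(sqr0_conj_fixed nbeta_sqr)/(nbeta_act_End_commute (chi_Slin bim r)).
  by case: beta_bal => _ _ betaR f' m'; rewrite /chi betaR //; exact: ShomP.
have /esym/(sqr0_conj_fixed nbeta_sqr)/(nbeta_act_End_commute eS) bal :=
  epi _ _ _ act_End_rmorph conj_rmorph act_chi_fixed e eS.
exact: (bal (SHom (asboolT fS))).
Qed.
End EndAction.

Section Factorization.
Variables (k : nat) (ps : 'I_k -> M -> S) (ys : 'I_k -> M).
Hypotheses (psS : forall j, is_Slin (ps j : M -> S^o))
           (ps_sum : \sum_(j < k) ps j (ys j) = 1).

Lemma scale_ps_sum (V : lmodType S) (v : V) : \sum_(j < k) ps j (ys j) *: v = v.
Proof. by rewrite -scaler_suml ps_sum scale1r. Qed.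

Lemma scale_ps_Slin (V : lmodType S) (v : V) j : is_Slin (fun z => ps j z *: v).
Proof. by move=> s x y; rewrite (psS j s x y) scalerDl scalerA. Qed.

Definition balanced_factor (q : Q) : A :=
  \sum_(j < k) beta (ys j) (fun z => ps j z *: q).

Lemma balanced_factor_additive : is_additive balanced_factor.
Proof.
move=> q1 q2; rewrite -big_split; apply: eq_bigr => j _ /=.
case: beta_bal => _ betaD _; rewrite -betaD; [|exact: scale_ps_Slin..].
by congr (beta _ _); apply/funext => z; rewrite scalerDr.
Qed.

Lemma balanced_factor_unique (phi : Q -> A) :
  is_additive phi -> (forall m f, is_Slin f -> phi (f m) = beta m f) ->
  phi =1 balanced_factor.
Proof.
move=> phiD phi_eval q; rewrite -[q in LHS]scale_ps_sum (additive_sum phiD).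
by apply: eq_bigr => j _; rewrite (phi_eval _ _ (scale_ps_Slin q j)).
Qed.

Hypothesis beta_End : End_balanced beta.

Lemma balanced_factor_eval m (f : M -> Q) :
  is_Slin f -> balanced_factor (f m) = beta m f.
Proof.
move=> fS; rewrite -[in RHS](scale_ps_sum m) (additive_sum (Rbalanced_additivel fS)).
apply: eq_bigr => j _; rewrite (beta_End (ys j) (scale_ps_Slin m j) fS).
by congr (beta _ _); apply/funext => z; rewrite (SlinZ fS).
Qed.
End Factorization.
End RBalancedMaps.

Lemma eval_Rbalanced (S R : pzRingType) (M : lmodType S) (ract : M -> R -> M)
    (Q : lmodType S) : is_Rbalanced ract (fun (m : M) (f : M -> Q) => f m).
Proof. by split=> // m1 m2 f /SlinD. Qed.

Lemma counit_iso_of_End_balanced (S R : pzRingType) (M : lmodType S)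
    (ract : M -> R -> M) (Q : lmodType S) :
  is_generator M ->
  (forall (A : zmodType) (beta : M -> (M -> Q) -> A),
     is_Rbalanced ract beta -> End_balanced beta) ->
  counit_iso ract Q.
Proof.
move=> /generator_trace1 [k [ps [ys [psS ps_sum]]]] Rbal_End.
split=> [|A beta beta_bal]; first exact: eval_Rbalanced.
split=> [|phi1 phi2 phi1D phi2D phi1_eval phi2_eval q].
  exists (balanced_factor beta ps ys); split.
    exact (balanced_factor_additive beta_bal ys psS).
  exact (balanced_factor_eval beta_bal psS ps_sum (Rbal_End A beta beta_bal)).
by rewrite (balanced_factor_unique psS ps_sum phi1D phi1_eval)
           (balanced_factor_unique psS ps_sum phi2D phi2_eval).
Qed.

Theorem proposition3p11 (R S : pzRingType) (M : lmodType S) (ract : M -> R -> M) :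
  is_bimodule ract ->
  is_generator M ->
  chi_ring_epi ract ->
  forall Q : lmodType S, counit_iso ract Q.
Proof.
move=> bim gen epi Q; apply: counit_iso_of_End_balanced gen _ => A beta beta_bal.
exact: Rbalanced_End_balanced beta_bal bim epi.
Qed.
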